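(* For every integer $n\ge 3$, $$f(n,\mathcal{B}(2K_2))=2^n-\binom{n}{2}-n-1.$$
   Context: $2K_2$ is the graph consisting of two disjoint edges. For a graph $G$, a hypergraph $H$ is a Berge-$G$ hypergraph if there are an injective map $\phi:V(G)\to V(H)$ and pairwise distinct hyperedges $e_{xy}\in E(H)$, one for each $xy\in E(G)$, with $\phi(x),\phi(y)\in e_{xy}$. $\mathcal{B}(G)$ denotes the family of all Berge-$G$ hypergraphs. For a positive integer $n$ and a graph $G$, $f(n,\mathcal{B}(G))$ is the smallest number of colors in a coloring of all subsets of $[n]=\{1,\dots,n\}$ (i.e. of $2^{[n]}$) such that there is no monochromatic Berge-$G$ hypergraph, i.e. no color class, viewed as a (non-uniform) hypergraph on $[n]$, contains a Berge-$G$ subhypergraph. *)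

From mathcomp Require Import all_boot.
Set Implicit Arguments. Unset Strict Implicit. Unset Printing Implicit Defensive.

(* H contains a Berge-2K2: 2K2 has vertices x1,y1,x2,y2 and edges x1y1, x2y2;
   an injective map = four pairwise distinct vertices of [n], and two
   distinct hyperedges e1 (containing x1,y1) and e2 (containing x2,y2). *)
Definition has_berge_2K2 (n : nat) (H : {set {set 'I_n}}) : Prop :=
  exists (x1 y1 x2 y2 : 'I_n) (e1 e2 : {set 'I_n}),
    [/\ uniq [:: x1; y1; x2; y2], e1 \in H, e2 \in H, e1 != e2 &
        [/\ x1 \in e1, y1 \in e1, x2 \in e2 & y2 \in e2]].

Definition good_coloring (n c : nat) (col : {set 'I_n} -> 'I_c) : Prop :=
  forall i : 'I_c, ~ has_berge_2K2 [set S : {set 'I_n} | col S == i].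

Definition colorable_no_berge_2K2 (n c : nat) : Prop :=
  exists col : {set 'I_n} -> 'I_c, good_coloring col.

(* Two distinct hyperedges of size at least 3 always carry a Berge-2K2:
   one of them, say S2, has a vertex b outside the other, S1; take another
   vertex u of S2 and two vertices of S1 avoiding u.  Hence all subsets of
   size at least 3 need pairwise distinct colours, which gives the lower bound
   2^n - C(n,2) - n - 1.  Conversely, give each such subset its own colour,
   colour each pair like a 3-set containing it and the sets of size at most 1
   arbitrarily: a colour class then has at most one hyperedge of size >= 2
   outside the 2-subsets of a 3-set, and a Berge-2K2 needs two hyperedges of
   size >= 2 covering four vertices. *)

From mathcomp Require Import all_boot zify.
Set Implicit Arguments. Unset Strict Implicit.

Lemma card_sets_leq (T : finType) k :
  #|[set S : {set T} | #|S| <= k]| = \sum_(i < k.+1) 'C(#|T|, i).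
Proof.
elim: k => [|k IHk].
  rewrite big_ord1 -card_draws; apply: eq_card => S.
  by rewrite !inE leqn0.
rewrite big_ord_recr /= -IHk -card_draws -cardsUI.
have -> : [set S : {set T} | #|S| <= k] :&: [set S : {set T} | #|S| == k.+1] = set0.
  by apply/setP => S; rewrite !inE andbC; case: eqP => // ->; rewrite ltnn.
rewrite cards0 addn0; apply: eq_card => S.
by rewrite !inE leq_eqVlt ltnS orbC.
Qed.

Lemma card_sets_geq3 (T : finType) :
  #|[set S : {set T} | 3 <= #|S|]| = 2 ^ #|T| - 'C(#|T|, 2) - #|T| - 1.
Proof.
set large := [set S : {set T} | 3 <= #|S|].
have card_sets : #|{set T}| = 2 ^ #|T|.
  by rewrite -[#|T|]cardsT -card_powerset powersetT cardsT.
have small : ~: large = [set S : {set T} | #|S| <= 2].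
  by apply/setP => S; rewrite !inE -ltnNge.
have := cardsC large.
rewrite small card_sets_leq !big_ord_recr big_ord0 /= bin0 bin1 card_sets.
(* [lia] fails on [2 ^ #|T|] unless it is abstracted. *)
set p := 2 ^ _; lia.
Qed.

Lemma berge_2K2_not_subset n (H : {set {set 'I_n}}) (S1 S2 : {set 'I_n}) :
  S1 \in H -> S2 \in H -> 3 <= #|S1| -> 2 <= #|S2| -> ~~ (S2 \subset S1) ->
  has_berge_2K2 H.
Proof.
move=> HS1 HS2 S1_ge3 S2_ge2 /subsetPn[b bS2 bS1].
have [u /setD1P[ub uS2]] : exists u, u \in S2 :\ b.
  by apply/card_gt0P; move: S2_ge2; rewrite (cardsD1 b) bS2.
have [x [y [/setD1P[xu xS1] /setD1P[yu yS1] xy]]] :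
    exists x y, [/\ x \in S1 :\ u, y \in S1 :\ u & x != y].
  apply/card_gt1P; move: S1_ge3; rewrite (cardsD1 u); case: (u \in S1); lia.
exists x, y, b, u, S1, S2; split => //=.
- rewrite !inE !negb_or xy xu yu (eq_sym b u) ub /= !andbT.
  by apply/andP; split; apply: contraNneq bS1 => <-.
- by apply: contraNneq bS1 => ->.
Qed.

Lemma berge_2K2_large n (H : {set {set 'I_n}}) (S1 S2 : {set 'I_n}) :
  S1 \in H -> S2 \in H -> 3 <= #|S1| -> 3 <= #|S2| -> S1 != S2 ->
  has_berge_2K2 H.
Proof.
move=> HS1 HS2 S1_ge3 S2_ge3 S12.
have [S21|S2_notin_S1] := boolP (S2 \subset S1); last first.
  exact: berge_2K2_not_subset HS1 HS2 S1_ge3 (ltnW S2_ge3) S2_notin_S1.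
apply: berge_2K2_not_subset HS2 HS1 S2_ge3 (ltnW S1_ge3) _.
by apply: contra S12 => S1_sub_S2; rewrite eqEsubset S1_sub_S2 S21.
Qed.

Lemma berge_2K2_edges n (H : {set {set 'I_n}}) :
  has_berge_2K2 H ->
  exists2 e1, e1 \in H & exists2 e2, e2 \in H &
    [/\ e1 != e2, 1 < #|e1|, 1 < #|e2| & 3 < #|e1 :|: e2|].
Proof.
move=> [x1 [y1 [x2 [y2 [e1 [e2 [uniq_xy He1 He2 e12 [x1e1 y1e1 x2e2 y2e2]]]]]]]].
move: (uniq_xy); rewrite /= !inE !negb_or => /and4P[/and3P[x1y1 _ _] /andP[y1x2 _] x2y2 _].
exists e1 => //; exists e2 => //; split => //.
- by apply/card_gt1P; exists x1, y1.
- by apply/card_gt1P; exists x2, y2.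
have -> : 4 = size [:: x1; y1; x2; y2] by [].
rewrite cardE; apply: uniq_leq_size => // z.
by rewrite mem_enum !inE => /or4P[] /eqP ->; rewrite ?x1e1 ?y1e1 ?x2e2 ?y2e2 ?orbT.
Qed.

(* Sets of size at most 1 are sent to [set: 'I_n]; their colour is irrelevant
   since they cannot contain two distinct vertices. *)
Definition lift3 n (S : {set 'I_n}) : {set 'I_n} :=
  if 3 <= #|S| then S
  else if #|S| == 2 then
    if [pick z in ~: S] is Some z then z |: S else S
  else [set: 'I_n].

Lemma lift3_id n (S : {set 'I_n}) : 3 <= #|S| -> lift3 S = S.
Proof. by rewrite /lift3 => ->. Qed.

Lemma subset_lift3 n (S : {set 'I_n}) : S \subset lift3 S.
Proof.
rewrite /lift3; case: ifP => // _; case: ifP => _; last exact: subsetT.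
by case: pickP => [z _|_]; rewrite ?subsetUr.
Qed.

Lemma card_lift3_pair n (S : {set 'I_n}) : 3 <= n -> #|S| = 2 -> #|lift3 S| = 3.
Proof.
move=> n_ge3 S2; rewrite /lift3 S2 /=.
case: pickP => [z|noz]; first by rewrite inE => zS; rewrite cardsU1 zS S2.
have := cardsC S; rewrite S2 card_ord.
by rewrite (eq_card0 (A := ~: S)) //; lia.
Qed.

Lemma card_lift3 n (S : {set 'I_n}) : 3 <= n -> 3 <= #|lift3 S|.
Proof.
move=> n_ge3; have [S_ge3|S_lt3] := leqP 3 #|S|; first by rewrite lift3_id.
have [S2|S_ne2] := eqVneq #|S| 2; first by rewrite card_lift3_pair.
by rewrite /lift3 (leqNgt 3 #|S|) S_lt3 (negbTE S_ne2) cardsT card_ord.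
Qed.

Lemma lift3_collision n (e1 e2 : {set 'I_n}) :
  3 <= n -> 1 < #|e1| -> 1 < #|e2| -> e1 != e2 -> lift3 e1 = lift3 e2 ->
  #|e1 :|: e2| <= 3.
Proof.
move=> n_ge3; wlog e1_lt3 : e1 e2 / #|e1| < 3.
  move=> sym e1_gt1 e2_gt1 e12 lift12.
  have [e1_ge3|] := leqP 3 #|e1|; last by move/sym; apply.
  have [e2_ge3|e2_lt3] := leqP 3 #|e2|.
    by move: lift12; rewrite !lift3_id // => /eqP; rewrite (negbTE e12).
  by rewrite setUC sym // eq_sym.
move=> e1_gt1 e2_gt1 _ lift12.
have e1_2 : #|e1| = 2 by lia.
rewrite -(card_lift3_pair n_ge3 e1_2); apply: subset_leq_card.
by rewrite subUset subset_lift3 lift12 subset_lift3.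
Qed.

Definition large_sets n : {set {set 'I_n}} := [set S : {set 'I_n} | 3 <= #|S|].

Lemma large_sets_injective_coloring n c (col : {set 'I_n} -> 'I_c) :
  good_coloring col -> {in large_sets n &, injective col}.
Proof.
move=> good S1 S2; rewrite !inE => S1_ge3 S2_ge3 col12.
have [//|S12] := eqVneq S1 S2; case: (good (col S1)).
by apply: (berge_2K2_large (S1 := S1) (S2 := S2)); rewrite ?inE ?col12.
Qed.

Lemma colors_ge_card_large_sets n c :
  colorable_no_berge_2K2 n c -> #|large_sets n| <= c.
Proof.
move=> [col /large_sets_injective_coloring col_inj].
by rewrite -[c]card_ord; apply: leq_card_in col_inj.
Qed.

Section Lift3Coloring.

Variable n : nat.
Hypothesis n_ge3 : 3 <= n.

Lemma lift3_large (S : {set 'I_n}) : lift3 S \in large_sets n.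
Proof. by rewrite inE card_lift3. Qed.

Definition lift3_coloring (S : {set 'I_n}) : 'I_#|large_sets n| :=
  enum_rank_in (lift3_large set0) (lift3 S).

Lemma lift3_coloring_good : good_coloring lift3_coloring.
Proof.
move=> i /berge_2K2_edges[e1 + [e2 + [e12 e1_gt1 e2_gt1 union_gt3]]].
rewrite !inE => /eqP col1 /eqP col2.
have lift12 : lift3 e1 = lift3 e2.
  apply: (enum_rank_in_inj (Ax0 := lift3_large set0) (Ay0 := lift3_large set0));
    rewrite ?lift3_large //.
  exact: etrans col1 (esym col2).
by move: union_gt3; rewrite ltnNge lift3_collision.
Qed.

Lemma colorable_card_large_sets : colorable_no_berge_2K2 n #|large_sets n|.
Proof. by exists lift3_coloring; apply: lift3_coloring_good. Qed.

End Lift3Coloring.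

Theorem theorem3 (n : nat) (hn : 3 <= n) :
  colorable_no_berge_2K2 n (2 ^ n - 'C(n, 2) - n - 1) /\
  (forall c : nat, colorable_no_berge_2K2 n c -> 2 ^ n - 'C(n, 2) - n - 1 <= c).
Proof.
have := card_sets_geq3 'I_n; rewrite card_ord -/(large_sets n) => <-.
split; first exact: colorable_card_large_sets.
exact: colors_ge_card_large_sets.
Qed.
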